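(* Let $n\geqslant 2$. For $\alpha\in\mathbf{I}\mathbb{N}_{\infty}^n$ let $\sigma_\alpha\in H(\mathbb{I})$ be the unique unit such that $\alpha=\sigma_\alpha\varepsilon$ for some idempotent $\varepsilon$ of $\mathbf{I}\mathbb{N}_{\infty}^n$. Then $\alpha\,\mathfrak{C}_{\mathbf{mg}}\,\beta$ if and only if $\sigma_\alpha=\sigma_\beta$; the quotient semigroup $\mathbf{I}\mathbb{N}_{\infty}^n/\mathfrak{C}_{\mathbf{mg}}$ is isomorphic to the symmetric group $\mathscr{S}_n$, and the natural homomorphism $\mathbf{I}\mathbb{N}_{\infty}^n\to\mathbf{I}\mathbb{N}_{\infty}^n/\mathfrak{C}_{\mathbf{mg}}$ corresponds to the map $\alpha\mapsto\sigma_\alpha$ onto $H(\mathbb{I})\cong\mathscr{S}_n$.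
   Context: $\mathbb{N}=\{1,2,3,\ldots\}$, $n\geqslant 2$, and $\mathbb{N}^n$ carries the Euclidean metric $d$. A partial isometry of $\mathbb{N}^n$ is an injective partial map $\alpha\colon\mathbb{N}^n\rightharpoonup\mathbb{N}^n$ with $d((\mathbf{x})\alpha,(\mathbf{y})\alpha)=d(\mathbf{x},\mathbf{y})$ for all $\mathbf{x},\mathbf{y}\in\operatorname{dom}\alpha$; it is cofinite if $\mathbb{N}^n\setminus\operatorname{dom}\alpha$ and $\mathbb{N}^n\setminus\operatorname{ran}\alpha$ are finite. $\mathbf{I}\mathbb{N}_{\infty}^n$ is the monoid of all partial cofinite isometries of $\mathbb{N}^n$ under composition of partial maps written on the right. Its identity is the identity map $\mathbb{I}$ of $\mathbb{N}^n$ and $H(\mathbb{I})$ is its group of units. $\mathscr{S}_n$ is the symmetric group on $\{1,\ldots,n\}$. For an inverse semigroup $S$, the least group congruence $\mathfrak{C}_{\mathbf{mg}}$ is defined by $a\,\mathfrak{C}_{\mathbf{mg}}\,b$ iff $ae=be$ for some idempotent $e\in S$. *)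

From HB Require Import structures.
From mathcomp Require Import all_boot all_order all_algebra all_fingroup.
Set Implicit Arguments. Unset Strict Implicit. Unset Printing Implicit Defensive.

(* Points of N^n are represented inside nat^n; N = {1,2,...} is carved out by
   the predicate [inN]. *)
Definition point (n : nat) := {ffun 'I_n -> nat}.

Definition inN (n : nat) (x : point n) : bool := [forall i, 0 < x i].

Definition dist2 (n : nat) (x y : point n) : nat :=
  \sum_(i < n) (`|x i - y i|%N) ^ 2.

Definition pmapN (n : nat) := point n -> option (point n).

(* Composition written on the right: (x)(alpha beta) = ((x)alpha)beta. *)
Definition pcompN (n : nat) (a b : pmapN n) : pmapN n :=
  fun x => obind b (a x).

Definition pidN (n : nat) : pmapN n := fun x => if inN x then Some x else None.

Definition IN (n : nat) (a : pmapN n) : Prop :=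
  (forall x y, a x = Some y -> inN x /\ inN y) /\
  (forall x y z, a x = Some z -> a y = Some z -> x = y) /\
  (* isometry (equality of distances <-> equality of squared distances) *)
  (forall x y x' y', a x = Some x' -> a y = Some y' -> dist2 x' y' = dist2 x y) /\
  (exists s : seq (point n), forall x, inN x -> a x = None -> x \in s) /\
  (exists s : seq (point n), forall y, inN y -> (forall x, a x <> Some y) -> y \in s).

Definition idemp (n : nat) (e : pmapN n) : Prop := IN e /\ pcompN e e = e.

Definition unitIN (n : nat) (s : pmapN n) : Prop :=
  IN s /\ exists t, IN t /\ pcompN s t = @pidN n /\ pcompN t s = @pidN n.

Definition unit_part (n : nat) (a s : pmapN n) : Prop :=
  unitIN s /\ exists e, idemp e /\ a = pcompN s e.

(* The least group congruence C_mg. *)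
Definition Cmg (n : nat) (a b : pmapN n) : Prop :=
  exists e, idemp e /\ pcompN a e = pcompN b e.

From mathcomp Require Import all_boot all_order all_algebra all_fingroup.
From mathcomp Require Import zify ring.
From Stdlib Require Import ClassicalEpsilon FunctionalExtensionality.
Set Implicit Arguments. Unset Strict Implicit. Unset Printing Implicit Defensive.
Import Order.TTheory GRing.Theory Num.Theory.

(* Every cofinite partial isometry [a] of N^n is a restriction of a coordinate
   permutation [p]. Far from the origin [a] is defined at a point [w] and at its
   unit neighbours [w + e_i]; their images differ by signed unit vectors, so by
   polarization [a] is affine with a signed-permutation linear part. Points of the
   domain and of the range lying next to a coordinate hyperplane (which exist in
   the cofinite domain and range because [n >= 2] leaves another coordinate free to
   be large) rule out reflections and translations. Hence [a = sigma_p e] with [e]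
   the partial identity on the domain of [a], and [a C_mg b] holds iff [a] and [b]
   agree on a cofinite set, i.e. iff they restrict the same permutation. *)

Lemma sum_sqr_eq1 (I : finType) (f : I -> int) : (\sum_i f i ^+ 2 = 1)%R ->
  exists k, (f k = 1 \/ f k = -1)%R /\ forall j, j != k -> f j = 0%R.
Proof.
move=> hs.
have [k hk] : exists k, f k != 0%R.
  apply/existsP; apply: contraT; rewrite negb_exists => /forallP h.
  move: hs; rewrite big1 // => k _; have := h k; rewrite negbK => /eqP ->.
  by rewrite expr0n.
exists k; move: hs; rewrite (bigD1 k) //=.
have hr : (0 <= \sum_(i | i != k) f i ^+ 2)%R by apply: sumr_ge0 => i _; exact: sqr_ge0.
move: hk hr; set r := (\sum_(i | i != k) _)%R => hk hr; rewrite expr2 => hs.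
have hh : ((f k < 0) || (0 < f k))%R by rewrite -neq_lt.
have hr0 : r = 0%R by case/orP: hh => hh; nia.
split; first by case/orP: hh => hh; nia.
move=> j hj; have := psumr_eq0P (fun i _ => sqr_ge0 (f i)) hr0 hj.
by move/eqP; rewrite sqrf_eq0 => /eqP.
Qed.

Section Geometry.
Local Open Scope ring_scope.
Variable n : nat.
Implicit Types (x y w : point n) (a : pmapN n).

Definition sqdist x y : int := \sum_(k < n) ((x k)%:Z - (y k)%:Z) ^+ 2.

Lemma dist2E x y : (dist2 x y)%:Z = sqdist x y.
Proof.
rewrite /dist2 /sqdist (big_morph Posz PoszD (erefl _)); apply: eq_bigr => k _.
by rewrite expnS expn1 PoszM abszE -normrM ger0_norm -?expr2 ?sqr_ge0.
Qed.

Definition dotc x y w : int :=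
  \sum_(k < n) ((x k)%:Z - (w k)%:Z) * ((y k)%:Z - (w k)%:Z).

Lemma polarization x y w : sqdist x w + sqdist y w - sqdist x y = 2 * dotc x y w.
Proof.
rewrite /sqdist /dotc -big_split /= -sumrB mulr_sumr; apply: eq_bigr => k _.
ring.
Qed.

Definition isometric a :=
  forall x y x' y', a x = Some x' -> a y = Some y' -> dist2 x' y' = dist2 x y.

Lemma isometric_dotc a x y w x' y' w' : isometric a ->
  a x = Some x' -> a y = Some y' -> a w = Some w' -> dotc x' y' w' = dotc x y w.
Proof.
move=> ha ex ey ew; have := polarization x y w; have := polarization x' y' w'.
rewrite -!dist2E (ha _ _ _ _ ex ew) (ha _ _ _ _ ey ew) (ha _ _ _ _ ex ey) => ->; lia.
Qed.

Lemma isometric_unit_step a x z x' z' : isometric a ->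
  a x = Some x' -> a z = Some z' -> dist2 z x = 1%N ->
  exists k (e : int), (e = 1 \/ e = -1) /\
    forall j, (z' j)%:Z - (x' j)%:Z = if j == k then e else 0.
Proof.
move=> ha ex ez d1.
have [|k [hk h0]] := @sum_sqr_eq1 _ (fun j => (z' j)%:Z - (x' j)%:Z).
  by rewrite -[LHS]/(sqdist z' x') -dist2E (ha _ _ _ _ ez ex) d1.
by exists k, ((z' k)%:Z - (x' k)%:Z); split=> // j; case: eqVneq => [->|/h0].
Qed.

Definition spike (K : nat) (i : 'I_n) (v : nat) : point n :=
  [ffun k => if k == i then v else K].

(* The images of [[ffun=> K]] and of its unit neighbours fix, by polarization,
   the affine map that [a] restricts. *)
Lemma isometric_affine a (K : nat) c : isometric a -> a [ffun=> K] = Some c ->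
  (forall i, exists z, a (spike K i K.+1) = Some z) ->
  exists (pi : 'I_n -> 'I_n) (eps : 'I_n -> int),
    [/\ injective pi, forall i, eps i = 1 \/ eps i = -1 &
        forall x y i, a x = Some y ->
          ((y (pi i))%:Z - (c (pi i))%:Z) * eps i = (x i)%:Z - K%:Z].
Proof.
move=> ha ec /fin_all_exists [z ez].
have step i : exists ke : 'I_n * int, (ke.2 = 1 \/ ke.2 = -1) /\
    forall j, (z i j)%:Z - (c j)%:Z = if j == ke.1 then ke.2 else 0.
  have [|k [e he]] := isometric_unit_step ha ec (ez i); last by exists (k, e).
  rewrite /dist2 (bigD1 i) //= big1 => [|j hj]; rewrite !ffunE ?eqxx; first lia.
  by rewrite (negbTE hj) subrr.
have [ke hke] := fin_all_exists step.
pose pi i := (ke i).1; pose eps i := (ke i).2.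
have formula x y i : a x = Some y -> ((y (pi i))%:Z - (c (pi i))%:Z) * eps i = (x i)%:Z - K%:Z.
  move=> exy; have := isometric_dotc ha exy (ez i) ec.
  rewrite /dotc (bigD1 (pi i)) //= big1 => [|j hj]; last first.
    by rewrite (hke i).2 (negbTE hj) mulr0.
  rewrite (bigD1 i) //= big1 => [|j hj]; last first.
    by rewrite !ffunE (negbTE hj) subrr mulr0.
  by rewrite (hke i).2 eqxx !ffunE eqxx !addr0 -/(eps i) => ->; lia.
exists pi, eps; split=> // [i j hij|i]; last exact: (hke i).1.
apply/eqP; apply: contraT => hne.
have := formula _ _ j (ez i); rewrite -hij !ffunE eq_sym (negbTE hne) subrr.
have := (hke i).2 (pi i); rewrite eqxx => ->.
by rewrite /eps; case: (hke i).1 => ->; case: (hke j).1 => ->.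
Qed.

End Geometry.

Section Permutations.
Variable n : nat.
Implicit Types (x y : point n) (p q : 'S_n) (a b e : pmapN n).

(* Coordinate [k] of [x] becomes coordinate [p k]. *)
Definition pt_perm x p : point n := [ffun k => x ((p^-1)%g k)].

Definition isom_perm p : pmapN n := fun x => if inN x then Some (pt_perm x p) else None.

Definition is_restr a p := forall x y, a x = Some y -> y = pt_perm x p.

Lemma pt_permM x p q : pt_perm (pt_perm x p) q = pt_perm x (p * q)%g.
Proof. by apply/ffunP => k; rewrite !ffunE invMg permM. Qed.

Lemma pt_perm1 x : pt_perm x 1%g = x.
Proof. by apply/ffunP => k; rewrite !ffunE invg1 perm1. Qed.

Lemma pt_permK x p : pt_perm (pt_perm x p) (p^-1)%g = x.
Proof. by rewrite pt_permM mulgV pt_perm1. Qed.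

Lemma pt_permKV x p : pt_perm (pt_perm x (p^-1)%g) p = x.
Proof. by rewrite pt_permM mulVg pt_perm1. Qed.

Lemma inN_pt_perm x p : inN (pt_perm x p) = inN x.
Proof.
apply/forallP/forallP => h k; last by rewrite ffunE.
by have := h (p k); rewrite ffunE -permM mulgV perm1.
Qed.

Lemma dist2_pt_perm x y p : dist2 (pt_perm x p) (pt_perm y p) = dist2 x y.
Proof.
rewrite /dist2 (reindex_inj (@perm_inj _ p)) /=.
by apply: eq_bigr => k _; rewrite !ffunE -permM mulgV perm1.
Qed.

Lemma isom_perm_IN p : IN (isom_perm p).
Proof.
rewrite /isom_perm; split; [|split; [|split; [|split]]].
- by move=> x y; case: ifP => hx // [<-]; rewrite inN_pt_perm.
- move=> x y z; case: ifP => hx //; case: ifP => hy // [<-] [].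
  by move/(congr1 (pt_perm^~ (p^-1)%g)); rewrite !pt_permK => ->.
- by move=> x y x' y'; case: ifP => hx //; case: ifP => hy // [<-] [<-];
    rewrite dist2_pt_perm.
- by exists [::] => x ->.
- exists [::] => y hy hnot; case: (hnot (pt_perm y (p^-1)%g)).
  by rewrite inN_pt_perm hy pt_permKV.
Qed.

Lemma isom_permM p q : pcompN (isom_perm p) (isom_perm q) = isom_perm (p * q)%g.
Proof.
apply: functional_extensionality => x; rewrite /pcompN /isom_perm.
by case: ifP => hx //=; rewrite inN_pt_perm hx pt_permM.
Qed.

Lemma isom_perm1 : isom_perm 1%g = @pidN n.
Proof. by apply: functional_extensionality => x; rewrite /pidN /isom_perm pt_perm1. Qed.

Lemma isom_perm_unit p : unitIN (isom_perm p).
Proof.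
split; first exact: isom_perm_IN.
exists (isom_perm (p^-1)%g); split; first exact: isom_perm_IN.
by rewrite !isom_permM mulgV mulVg isom_perm1.
Qed.

Lemma isom_perm_restr p : is_restr (isom_perm p) p.
Proof. by move=> x y; rewrite /isom_perm; case: ifP => // _ [<-]. Qed.

Lemma restr_comp a b p q : is_restr a p -> is_restr b q ->
  is_restr (pcompN a b) (p * q)%g.
Proof.
move=> hp hq x z; rewrite /pcompN; case E: (a x) => [y|] //= Ez.
by rewrite (hq _ _ Ez) (hp _ _ E) pt_permM.
Qed.

Lemma idemp_restr1 e : idemp e -> is_restr e 1%g.
Proof.
move=> [[_ [hinj _]] he] y z ez; rewrite pt_perm1.
have := congr1 (fun f => f y) he; rewrite /pcompN ez /= => ezz.
by rewrite (hinj _ _ _ ez ezz).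
Qed.

Lemma restr_uniq a p q x y : is_restr a p -> is_restr a q -> a x = Some y ->
  injective x -> p = q.
Proof.
move=> hp hq exy hx; have := hp _ _ exy; rewrite (hq _ _ exy) => /ffunP h.
by apply: invg_inj; apply/permP => k; apply: hx; have := h k; rewrite !ffunE.
Qed.

End Permutations.

Section Cofinite.
Variable n : nat.
Implicit Types (x y : point n) (p q : 'S_n) (a b : pmapN n).

Lemma inNP x : inN x -> forall i, 0 < x i.
Proof. by move/forallP. Qed.

Lemma seq_bounded (s : seq (point n)) :
  exists K, forall z, z \in s -> forall j, z j < K.
Proof.
elim: s => [|z s [K HK]]; first by exists 0.
exists (maxn K (\max_j z j).+1) => t; rewrite inE => /orP [/eqP -> | ht] j.
  by rewrite leq_max ltnS leq_bigmax orbT.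
by rewrite leq_max HK.
Qed.

Lemma IN_dom_far a : IN a -> exists K, 0 < K /\
  forall x, inN x -> (exists j, K <= x j) -> exists y, a x = Some y.
Proof.
case=> _ [_ [_ [[s hs] _]]]; have [K HK] := seq_bounded s.
exists K.+1; split => // x hx [j hj].
case e : (a x) => [y|]; first by exists y.
by have /(ltn_trans hj) := HK _ (hs _ hx e) j; rewrite ltnn.
Qed.

Lemma IN_ran_far a : IN a -> exists K, 0 < K /\
  forall y, inN y -> (exists j, K <= y j) -> exists x, a x = Some y.
Proof.
case=> _ [_ [_ [_ [s hs]]]]; have [K HK] := seq_bounded s.
exists K.+1; split => // y hy [j hj].
apply: NNPP => hnot.
by have /(ltn_trans hj) := HK _ (hs _ hy (fun x e => hnot (ex_intro _ x e))) j; rewrite ltnn.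
Qed.

Definition diag_pt (K : nat) : point n := [ffun k : 'I_n => K + k].

Lemma diag_pt_inj K : injective (diag_pt K).
Proof. by move=> i j; rewrite !ffunE => /eqP; rewrite eqn_add2l => /eqP/ord_inj. Qed.

Lemma diag_pt_inN K : 0 < K -> inN (diag_pt K).
Proof. by move=> hK; apply/forallP => k; rewrite ffunE; lia. Qed.

Section Nonempty.
Hypothesis n_gt0 : 0 < n.
Let i0 : 'I_n := Ordinal n_gt0.

Lemma IN_restr_uniq a p q : IN a -> is_restr a p -> is_restr a q -> p = q.
Proof.
move=> ha hp hq; have [K [hK hD]] := IN_dom_far ha.
have [|y e] := hD (diag_pt K) (diag_pt_inN hK); first by exists i0; rewrite ffunE leq_addr.
exact: restr_uniq hp hq e (@diag_pt_inj K).
Qed.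

(* [a] maps far points to far points, so [pcompN a b] is defined far away. *)
Lemma restr_comp_uniq a b p q r : IN a -> IN b -> is_restr a p ->
  is_restr (pcompN a b) q -> is_restr (pcompN a b) r -> q = r.
Proof.
move=> ha hb hp hq hr; have [Ka [hKa hDa]] := IN_dom_far ha.
have [Kb [hKb hDb]] := IN_dom_far hb.
pose x := diag_pt (maxn Ka Kb).
have hx : inN x by apply: diag_pt_inN; lia.
have [|y E] := hDa x hx; first by exists i0; rewrite ffunE; lia.
have [|z Ez] := hDb y (ha.1 _ _ E).2; first by exists i0; rewrite (hp _ _ E) !ffunE; lia.
have Ex : pcompN a b x = Some z by rewrite /pcompN E.
exact: restr_uniq hq hr Ex (@diag_pt_inj _).
Qed.

End Nonempty.
End Cofinite.

Section Rigidity.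
Variable n : nat.
Hypothesis n_gt1 : 1 < n.
Implicit Types (x y : point n) (a : pmapN n).

Lemma exists_other (i : 'I_n) : exists j, j != i.
Proof.
have [->|hi] := eqVneq i (Ordinal (ltnW n_gt1)).
  by exists (Ordinal n_gt1); apply/eqP => /(congr1 val) /=.
by exists (Ordinal (ltnW n_gt1)); rewrite eq_sym.
Qed.

(* [n >= 2] leaves a free coordinate that can be pushed into the cofinite domain. *)
Lemma IN_spike_dom a : IN a -> exists L, 0 < L /\
  forall i v, 0 < v -> exists y, a (spike L i v) = Some y.
Proof.
move=> ha; have [L [hL hD]] := IN_dom_far ha; exists L; split=> // i v hv.
have [j hj] := exists_other i.
apply: hD; first by apply/forallP => k; rewrite ffunE; case: ifP.
by exists j; rewrite ffunE (negbTE hj).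
Qed.

Lemma IN_spike_ran a : IN a ->
  exists L, forall k v, 0 < v -> exists x, a x = Some (spike L k v).
Proof.
move=> ha; have [L [hL hR]] := IN_ran_far ha; exists L => k v hv.
have [j hj] := exists_other k.
apply: hR; first by apply/forallP => i; rewrite ffunE; case: ifP.
by exists j; rewrite ffunE (negbTE hj).
Qed.

(* Points of the domain (resp. range) with coordinate [i] (resp. [k]) equal to
   [1] or very large rule out a reflection and a translation. *)
Lemma IN_coord_affine a i k (e : int) (c b : nat) : IN a -> (e = 1 \/ e = -1)%R ->
  (forall x y, a x = Some y -> ((y k)%:Z - c%:Z) * e = (x i)%:Z - b%:Z)%R ->
  forall x y, a x = Some y -> y k = x i.
Proof.
move=> ha he hf; have [L [_ hD]] := IN_spike_dom ha; have [L' hR] := IN_spike_ran ha.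
have img_pos x y : a x = Some y -> 0 < y k by move=> exy; exact: inNP (ha.1 _ _ exy).2 k.
have he1 : e = 1%R.
  have [//|y1 e1] := hD i (c + b).+1.
  by have := hf _ _ e1; have := img_pos _ _ e1; rewrite ffunE eqxx; case: he => ->; lia.
have hbc : b <= c.
  have [//|y1 e1] := hD i 1.
  by have := hf _ _ e1; have := img_pos _ _ e1; rewrite ffunE eqxx he1; lia.
have hcb : c <= b.
  have [//|x1 e1] := hR k 1.
  by have := hf _ _ e1; have := inNP (ha.1 _ _ e1).1 i; rewrite ffunE eqxx he1; lia.
by move=> x y exy; have := hf _ _ exy; rewrite he1; lia.
Qed.

Theorem IN_restr_perm a : IN a -> exists p, is_restr a p.
Proof.
move=> ha; have [L [hL hD]] := IN_spike_dom ha.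
have [c ec] : exists c, a [ffun=> L] = Some c.
  have -> : [ffun=> L] = spike L (Ordinal (ltnW n_gt1)) L.
    by apply/ffunP => k; rewrite !ffunE; case: ifP.
  exact: hD.
have [pi [eps [pi_inj heps hpi]]] :=
  isometric_affine ha.2.2.1 ec (fun i => hD i L.+1 isT).
have hcoord x y i : a x = Some y -> y (pi i) = x i.
  move: x y; apply: IN_coord_affine ha (heps i) _ => x y; exact: hpi.
exists (perm pi_inj) => x y exy; apply/ffunP => k; rewrite ffunE.
have hk : pi ((perm pi_inj)^-1 k)%g = k by rewrite -(permE pi_inj) permKV.
by rewrite -{1}hk (hcoord _ _ _ exy).
Qed.

End Rigidity.

Definition perm_of n (a : pmapN n) : 'S_n := epsilon (inhabits 1%g) (is_restr a).

Section Semigroup.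
Variable n : nat.
Hypothesis n_gt1 : 1 < n.
Let n_gt0 : 0 < n := ltnW n_gt1.
Implicit Types (x y : point n) (p q : 'S_n) (a b e s : pmapN n).

Lemma perm_ofP a : IN a -> is_restr a (perm_of a).
Proof. by move=> ha; apply: epsilon_spec; apply: IN_restr_perm. Qed.

Lemma perm_of_eq a p : IN a -> is_restr a p -> perm_of a = p.
Proof. by move=> ha hp; exact: (IN_restr_uniq n_gt0 ha (perm_ofP ha) hp). Qed.

Lemma perm_of_isom p : perm_of (isom_perm p) = p.
Proof. exact: perm_of_eq (isom_perm_IN p) (@isom_perm_restr _ p). Qed.

Lemma perm_of_comp a b : IN a -> IN b -> perm_of (pcompN a b) = (perm_of a * perm_of b)%g.
Proof.
move=> ha hb; have hab := restr_comp (perm_ofP ha) (perm_ofP hb).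
apply: (restr_comp_uniq n_gt0 ha hb (perm_ofP ha) _ hab).
by apply: epsilon_spec; exists (perm_of a * perm_of b)%g.
Qed.

Lemma unitIN_isom_perm s : unitIN s -> exists p, s = isom_perm p.
Proof.
move=> [hs [t [_ [st _]]]]; exists (perm_of s).
apply: functional_extensionality => x; rewrite /isom_perm.
case: ifP => hx; last first.
  by case E: (s x) => [y|] //; have := (hs.1 _ _ E).1; rewrite hx.
have := congr1 (fun f => f x) st; rewrite /pcompN /pidN hx.
by case E: (s x) => [y|] //= _; rewrite (perm_ofP hs E).
Qed.

Definition sub_id e := forall y z, e y = Some z -> inN y /\ z = y.

Lemma sub_id_idemp e : sub_id e ->
  (exists s : seq (point n), forall x, inN x -> e x = None -> x \in s) -> idemp e.
Proof.
move=> he [s hs]; split; last first.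
  apply: functional_extensionality => y; rewrite /pcompN.
  by case E: (e y) => [z|] //=; have [_ ez] := he _ _ E; subst z.
split; [|split; [|split; [|split]]].
- by move=> x y /he [hx ->].
- by move=> x y z /he [_ ->] /he [_ ->].
- by move=> x y x' y' /he [_ ->] /he [_ ->].
- by exists s.
- exists s => y hy hnot; apply: hs => //.
  by case E: (e y) => [z|] //; have [_ ez] := he _ _ E; case: (hnot y); rewrite E ez.
Qed.

Lemma sub_id_comp e1 e2 : sub_id e1 -> sub_id e2 -> sub_id (pcompN e1 e2).
Proof.
move=> h1 h2 y z; rewrite /pcompN; case E: (e1 y) => [w|] //= E2.
by have [hy ew] := h1 _ _ E; subst w; have [_ ->] := h2 _ _ E2.
Qed.

(* The idempotent [e] in the factorization [a = isom_perm p * e]. *)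
Definition idpart a p := pcompN (isom_perm (p^-1)%g) a.

Lemma idpartE a p y : inN y -> idpart a p y = a (pt_perm y (p^-1)%g).
Proof. by move=> hy; rewrite /idpart /pcompN /isom_perm hy. Qed.

Lemma idpart_sub_id a p : is_restr a p -> sub_id (idpart a p).
Proof.
move=> hp y z; rewrite /idpart /pcompN /isom_perm; case: ifP => hy //= E.
by rewrite (hp _ _ E) pt_permKV.
Qed.

Lemma idpart_cofinite a p : IN a ->
  exists s : seq (point n), forall y, inN y -> idpart a p y = None -> y \in s.
Proof.
move=> [_ [_ [_ [[s hs] _]]]]; exists (map (fun z => pt_perm z p) s) => y hy E.
rewrite -(pt_permKV y p); apply: map_f; apply: hs; first by rewrite inN_pt_perm.
by rewrite -idpartE.
Qed.

Lemma unit_part_isom_perm a p : IN a -> is_restr a p -> unit_part a (isom_perm p).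
Proof.
move=> ha hp; split; first exact: isom_perm_unit.
exists (idpart a p); split.
  exact: sub_id_idemp (idpart_sub_id hp) (idpart_cofinite p ha).
apply: functional_extensionality => x; rewrite /pcompN /isom_perm.
case hx: (inN x) => /=; first by rewrite idpartE ?inN_pt_perm // pt_permK.
by case E: (a x) => [y|] //; have := (ha.1 _ _ E).1; rewrite hx.
Qed.

Lemma unit_part_iff a s : IN a -> unit_part a s <-> s = isom_perm (perm_of a).
Proof.
move=> ha; split=> [[hs [e [he ea]]]|->]; last exact: unit_part_isom_perm (perm_ofP ha).
have [p eps] := unitIN_isom_perm hs.
have hp : is_restr a p.
  by rewrite ea -[p]mulg1 eps; exact: restr_comp (@isom_perm_restr _ p) (idemp_restr1 he).
by rewrite (perm_of_eq ha hp).
Qed.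

(* The witness is the partial identity on the common part of the domains. *)
Lemma Cmg_of_restr a b p : IN a -> IN b -> is_restr a p -> is_restr b p -> Cmg a b.
Proof.
move=> ha hb hpa hpb; exists (pcompN (idpart a p) (idpart b p)); split.
  apply: sub_id_idemp; first exact: sub_id_comp (idpart_sub_id hpa) (idpart_sub_id hpb).
  have [s1 h1] := idpart_cofinite p ha; have [s2 h2] := idpart_cofinite p hb.
  exists (s1 ++ s2) => y hy; rewrite /pcompN mem_cat.
  case E: (idpart a p y) => [z|] /=; last by rewrite h1.
  by have [_ ->] := idpart_sub_id hpa E => E2; rewrite h2 ?orbT.
apply: functional_extensionality => x; rewrite /pcompN.
case Ea: (a x) => [y|]; case Eb: (b x) => [y'|] //=.
- by rewrite (hpa _ _ Ea) (hpb _ _ Eb).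
- have hy := (ha.1 _ _ Ea).2; have ey := hpa _ _ Ea; subst y.
  by rewrite idpartE // pt_permK Ea /= idpartE // pt_permK Eb.
- have hy := (hb.1 _ _ Eb).2; have ey := hpb _ _ Eb; subst y'.
  by rewrite idpartE // pt_permK Ea.
Qed.

Lemma Cmg_iff a b : IN a -> IN b -> Cmg a b <-> perm_of a = perm_of b.
Proof.
move=> ha hb; split=> [[e [he hab]]|hab]; last first.
  by apply: (Cmg_of_restr ha hb (perm_ofP ha)); rewrite hab; exact: perm_ofP.
have restr_e c : IN c -> is_restr (pcompN c e) (perm_of c).
  by move=> hc; rewrite -[perm_of c]mulg1; exact: restr_comp (perm_ofP hc) (idemp_restr1 he).
apply: (restr_comp_uniq n_gt0 ha he.1 (perm_ofP ha) (restr_e _ ha)).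
by rewrite hab; exact: restr_e.
Qed.

End Semigroup.

Theorem theorem3p7 (n : nat) (hn : 2 <= n) :
  (forall a : pmapN n, IN a -> exists! s, unit_part a s) /\
  (forall a b s t : pmapN n, IN a -> IN b -> unit_part a s -> unit_part b t ->
     (Cmg a b <-> s = t)) /\
  exists psi : pmapN n -> 'S_n,
    (forall s t, unitIN s -> unitIN t -> psi (pcompN s t) = (psi s * psi t)%g) /\
    (forall s t, unitIN s -> unitIN t -> psi s = psi t -> s = t) /\
    (forall p : 'S_n, exists s, unitIN s /\ psi s = p) /\
    exists phi : pmapN n -> 'S_n,
      (forall a s, IN a -> unit_part a s -> phi a = psi s) /\
      (forall a b, IN a -> IN b -> phi (pcompN a b) = (phi a * phi b)%g) /\
      (forall p : 'S_n, exists a, IN a /\ phi a = p) /\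
      (forall a b, IN a -> IN b -> (phi a = phi b <-> Cmg a b)).
Proof.
have isom_perm_inj (p q : 'S_n) : isom_perm p = isom_perm q -> p = q.
  by move/(congr1 (@perm_of n)); rewrite !perm_of_isom.
have perm_of_surj (p : 'S_n) : exists s, unitIN s /\ perm_of s = p.
  by exists (isom_perm p); rewrite perm_of_isom //; split; first exact: isom_perm_unit.
split=> [a ha|]; first by exists (isom_perm (perm_of a)); split=> [|s]; rewrite unit_part_iff.
split=> [a b s t ha hb|].
  by rewrite !unit_part_iff // => -> ->; rewrite Cmg_iff //; split=> [->|/isom_perm_inj].
exists (@perm_of n); split.
  move=> _ _ /(unitIN_isom_perm hn) [p ->] /(unitIN_isom_perm hn) [q ->].
  by rewrite isom_permM !perm_of_isom.
split=> [_ _ /(unitIN_isom_perm hn) [p ->] /(unitIN_isom_perm hn) [q ->]|].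
  by rewrite !perm_of_isom // => ->.
split=> //; exists (@perm_of n); split=> [a s ha|].
  by rewrite unit_part_iff // => ->; rewrite perm_of_isom.
split; first exact: perm_of_comp.
split=> [p|a b ha hb]; last by rewrite Cmg_iff.
by have [s [[hs _] <-]] := perm_of_surj p; exists s.
Qed.
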